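(* Let $v$ be a vertex of a pasting scheme. There do not exist four distinct edges $e:u\to v$, $b:v\to w$, $a:q\to v$, $f:v\to p$ incident to $v$ that appear in the clockwise cyclic order of edges around $v$ in the order $e,b,a,f$ (possibly with other edges in between). Equivalently, in the cyclic order around $v$ the incoming edges form one consecutive block and the outgoing edges another.
   Context: A plane graph is a finite connected directed graph $G$ with an embedding in the plane $\mathbb C$; the edges incident to a vertex inherit a clockwise cyclic order from the orientation of the plane. Its faces are the closures of the connected components of $\mathbb C\setminus G$; the unbounded one is the exterior face, the others interior faces. Each edge has a face on its left and one on its right. The exterior face is anchorable if the set of edges having the exterior face on their left and the set having it on their right each form a nonempty directed path from a vertex $s_G$ to a vertex $t_G$. An interior face $F$ is anchorable if the set of edges having $F$ on their right and the set having $F$ on their left each form a nonempty directed path from $s_F$ to $t_F$, with no common edges and no common vertices other than $s_F,t_F$. A pasting scheme is a finite connected plane graph all of whose faces are anchorable, with $s_G$ the only vertex with no incoming edges and $t_G$ the only vertex with no outgoing edges. *)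

(* A plane graph is encoded as a combinatorial map
   (rotation system) of genus 0 with a designated exterior face. *)
From mathcomp Require Import all_boot.
Set Implicit Arguments. Unset Strict Implicit. Unset Printing Implicit Defensive.

Section PlaneGraph.
Variables (V E : finType) (src tgt : E -> V).

(* Darts (half-edges): (e, true) is the end of e at src e (pointing along e),
   (e, false) is the end of e at tgt e (pointing backwards along e). *)
Definition dvert (d : E * bool) : V := if d.2 then src d.1 else tgt d.1.

Definition alpha (d : E * bool) : E * bool := (d.1, ~~ d.2).

Variable rot : E * bool -> E * bool.
(* rot d = the next dart clockwise around the vertex dvert d. *)

(* Face permutation: walking along a dart and then turning to the next dart
   clockwise around the reached vertex traverses the face lying on the LEFT
   of the darts (darts oriented away from their vertex). *)
Definition phi (d : E * bool) : E * bool := rot (alpha d).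

Definition rotation_system : Prop :=
  [/\ injective rot,
      forall d, dvert (rot d) = dvert d,
      forall d d', dvert d = dvert d' -> fconnect rot d d'
    & forall v, exists d, dvert d = v].

Definition map_connected : Prop :=
  forall d d', connect (fun x y => (y == rot x) || (y == alpha x)) d d'.

(* genus 0 (Euler's formula V - E + F = 2 for a connected map) *)
Definition genus0 : Prop := #|V| + fcard phi predT = #|E| + 2.

Definition plane_graph : Prop :=
  [/\ rotation_system, map_connected & genus0].

Definition face_left (x : E * bool) (e : E) : bool := fconnect phi x (e, true).
Definition face_right (x : E * bool) (e : E) : bool := fconnect phi x (e, false).

Fixpoint walk (x : V) (p : seq E) : bool :=
  if p is e :: p' then (src e == x) && walk (tgt e) p' else true.

Definition pverts (s : V) (p : seq E) : seq V := s :: map tgt p.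

Definition dpath (s t : V) (p : seq E) : bool :=
  [&& p != [::], walk s p, last s (map tgt p) == t & uniq (pverts s p)].

Definition forms_path (P : E -> bool) (s t : V) (p : seq E) : Prop :=
  dpath s t p /\ forall e, (e \in p) = P e.

Definition exterior_anchorable (d0 : E * bool) (s t : V) : Prop :=
  exists pl pr, forms_path (face_left d0) s t pl /\ forms_path (face_right d0) s t pr.

Definition interior_anchorable (x : E * bool) : Prop :=
  exists (s t : V) (pr pl : seq E),
    [/\ forms_path (face_right x) s t pr, forms_path (face_left x) s t pl,
        forall e, e \in pr -> e \notin pl
      & forall v, v \in pverts s pr -> v \in pverts s pl -> v = s \/ v = t].

Definition pasting_scheme (d0 : E * bool) : Prop :=
  plane_graph /\
  exists sG tG : V,
    [/\ exterior_anchorable d0 sG tG,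
        forall x, ~~ fconnect phi d0 x -> interior_anchorable x,
        forall v, (forall e, tgt e != v) <-> v = sG
      & forall v, (forall e, src e != v) <-> v = tG].

Definition cyc_ordered (d1 d2 d3 d4 : E * bool) : bool :=
  [&& fconnect rot d1 d2, fconnect rot d1 d3, fconnect rot d1 d4,
      findex rot d1 d2 < findex rot d1 d3 & findex rot d1 d3 < findex rot d1 d4].

End PlaneGraph.

From mathcomp Require Import all_boot.
From mathcomp Require Import zify.
Set Implicit Arguments. Unset Strict Implicit. Unset Printing Implicit Defensive.

(* Proof idea: a counting argument with Euler's formula.  Label every dart
   by its direction (true = outgoing from its vertex).  For a map f on darts,
   a c-switch of f is a dart z labelled c with f z not labelled c.
   - Around each vertex (orbits of rot) both labels occur at every inner
     vertex, i.e. every vertex except the source and the sink, so each of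
     the at least #|V| - 2 inner vertices carries a true-switch and a
     false-switch of rot; the vertex v with the cyclic pattern in, out, in,
     out carries two false-switches.  Hence rot has >= 2 #|V| - 3 switches.
   - Every face (orbit of phi) is anchorable, so both labels occur on it,
     hence phi has >= 2 F switches, F the number of faces.
   - Since phi = rot \o alpha, the darts that are not switches of rot are,
     up to the bijection alpha, exactly the switches of phi; so the two
     switch counts add up to the 2 #|E| darts. *)

Section Switches.
Variables (T : finType) (f : T -> T) (lab : T -> bool).

Definition switch (c : bool) (z : T) : bool := (lab z == c) && (lab (f z) != c).
Definition switches (c : bool) : {set T} := [set z | switch c z].

Definition changes : {set T} := [set z | lab (f z) != lab z].

Lemma card_changes : #|changes| = #|switches true| + #|switches false|.
Proof.
rewrite -cardsUI.
have -> : switches true :&: switches false = set0.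
  by apply/setP => z; rewrite !inE /switch; case: (lab z); case: (lab (f z)).
rewrite cards0 addn0; apply: eq_card => z; rewrite !inE /switch.
by case: (lab z); case: (lab (f z)).
Qed.

Lemma nat_switch (p : nat -> bool) i j :
  i <= j -> p i -> ~~ p j -> exists2 m, i <= m < j & p m && ~~ p m.+1.
Proof.
elim: j => [|j IH] lij pi npj.
  by move: lij; rewrite leqn0 => /eqP i0; rewrite -i0 pi in npj.
move: lij; rewrite leq_eqVlt ltnS => /orP [/eqP ei|ij]; first by rewrite -ei pi in npj.
case: (boolP (p j)) => pj; first by exists j; rewrite ?ij ?ltnSn ?pj.
have [m /andP [im mj] hm] := IH ij pi pj.
by exists m; rewrite // im (ltn_trans mj).
Qed.

Lemma switch_between x i j c :
  i <= j -> lab (iter i f x) = c -> lab (iter j f x) != c ->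
  exists2 m, i <= m < j & switch c (iter m f x).
Proof.
move=> ij ic jc.
have [m mij sw] := @nat_switch (fun m => lab (iter m f x) == c) i j ij (introT eqP ic) jc.
by exists m; rewrite // /switch -iterS.
Qed.

Lemma switch_in_orbit x y c :
  fconnect f x y -> lab x = c -> lab y != c -> exists2 z, fconnect f x z & switch c z.
Proof.
move=> xy xc yc; have jc : lab (iter (findex f x y) f x) != c by rewrite iter_findex.
have [m _ sw] := switch_between (leq0n _) xc jc.
by exists (iter m f x); rewrite ?fconnect_iter.
Qed.

Lemma two_switches x c i j k :
  i <= j -> j <= k -> k < order f x ->
  lab x = c -> lab (iter i f x) != c -> lab (iter j f x) = c -> lab (iter k f x) != c ->
  2 <= #|[set z in switches c | fconnect f x z]|.
Proof.
move=> ij jk ko xc ic jc kc.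
have [m1 /andP [_ m1i] sw1] := switch_between (leq0n i) xc ic.
have [m2 /andP [jm2 m2k] sw2] := switch_between jk jc kc.
have m12 : m1 < m2 by lia.
have neq : iter m1 f x != iter m2 f x.
  apply/eqP => /(congr1 (findex f x)); rewrite !findex_iter; lia.
have sub : [set iter m1 f x; iter m2 f x] \subset [set z in switches c | fconnect f x z].
  by apply/subsetP => z; rewrite !inE => /orP [] /eqP ->; rewrite fconnect_iter ?sw1 ?sw2.
by move: (subset_leq_card sub); rewrite cards2 neq.
Qed.

Section Classes.
Variables (U : finType) (cls : T -> U).
Hypothesis cls_f : forall x, cls (f x) = cls x.

Lemma cls_connect x y : fconnect f x y -> cls y = cls x.
Proof. by move=> /iter_findex <-; elim: (findex f x y) => //= n IH; rewrite cls_f. Qed.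

Definition bicolored (c : bool) (u : U) : Prop :=
  exists x y, [/\ cls x = u, fconnect f x y, lab x = c & lab y != c].

Lemma card_switches_ge (S : {set U}) (X : {set T}) c :
  (forall u, u \in S -> bicolored c u) -> X \subset switches c ->
  (forall z, z \in X -> cls z \notin S) -> #|S| + #|X| <= #|switches c|.
Proof.
move=> Sbi sX Xout; set Y := [set z in switches c | cls z \in S].
have SY : S \subset cls @: Y.
  apply/subsetP => u uS; have [x [y [xu xy xc yc]]] := Sbi u uS.
  have [z xz swz] := switch_in_orbit xy xc yc.
  have zu : cls z = u by rewrite (cls_connect xz).
  by apply/imsetP; exists z; rewrite // !inE zu uS swz.
have YX : Y :&: X = set0.
  apply/setP => z; rewrite !inE; apply/negbTE; apply/andP => -[/andP [_ zS] zX].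
  by move: (Xout z zX); rewrite zS.
have YXsw : #|Y :|: X| <= #|switches c|.
  apply/subset_leq_card/subsetP => z; rewrite inE => /orP [|/(subsetP sX) //].
  by rewrite inE => /andP [].
have SYc := leq_trans (subset_leq_card SY) (leq_imset_card cls Y).
have cardYX : #|Y :|: X| = #|Y| + #|X| by rewrite -cardsUI YX cards0 addn0.
by move: YXsw; rewrite cardYX; lia.
Qed.

Lemma card_bicolored_le_switches (S : {set U}) c :
  (forall u, u \in S -> bicolored c u) -> #|S| <= #|switches c|.
Proof.
move=> Sbi; rewrite -[#|S|]addn0 -(cards0 T).
apply: card_switches_ge => //; first by apply/subsetP => z; rewrite in_set0.
by move=> z; rewrite in_set0.
Qed.

End Classes.

Lemma orbits_le_switches c :
  injective f -> (forall x c', exists2 y, fconnect f x y & lab y = c') ->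
  fcard f predT <= #|switches c|.
Proof.
move=> finj both; have fsym := fconnect_sym finj.
have root_f x : froot f (f x) = froot f x by apply/esym/(rootP fsym)/fconnect1.
have -> : fcard f predT = #|[set r | froots f r]|.
  by apply: eq_card => r; rewrite !inE andbT.
apply: (card_bicolored_le_switches root_f) => r; rewrite inE => /eqP rootr.
have [x rx xc] := both r c; have [y ry yc] := both r (~~ c).
exists x, y; split => //; last by rewrite yc; case: c {xc yc}.
- by rewrite -(rootP fsym rx) rootr.
- by rewrite fsym in rx; exact: connect_trans rx ry.
Qed.

End Switches.

Section Darts.
Variables (V E : finType) (src tgt : E -> V) (rot : E * bool -> E * bool).

Lemma alpha_inj : injective (@alpha E).
Proof. by apply: (can_inj (g := @alpha E)) => -[x b]; rewrite /alpha /= negbK. Qed.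

Lemma phi_inj : injective rot -> injective (phi rot).
Proof. by move=> rinj x y /rinj /alpha_inj. Qed.

(* The darts where phi keeps the label are, through alpha, exactly those
   where rot changes it. *)
Lemma changes_rot_phi : #|changes rot snd| + #|changes (phi rot) snd| = 2 * #|E|.
Proof.
have -> : changes (phi rot) snd = @alpha E @^-1: ~: changes rot snd.
  by apply/setP => -[x c]; rewrite !inE /phi /alpha /=; case: (rot _) => y [] /=; case: c.
by rewrite card_preimset ?cardsC ?card_prod ?card_bool 1?mulnC //; exact: alpha_inj.
Qed.

Lemma path_gives_dart x c (p : seq E) :
  p != [::] -> (forall e, (e \in p) = fconnect (phi rot) x (e, c)) ->
  exists2 y, fconnect (phi rot) x y & y.2 = c.
Proof. by case: p => // e p _ Hp; exists (e, c); rewrite -?Hp ?mem_head. Qed.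

(* In a pasting scheme every face has edges on both of its sides, so both
   labels occur on every phi-orbit. *)
Lemma faces_bicolored d0 :
  pasting_scheme src tgt rot d0 ->
  forall x c, exists2 y, fconnect (phi rot) x y & y.2 = c.
Proof.
move=> [[[rinj _ _ _] _ _] [sG [tG [[pl [pr [[/andP [pl0 _] Hl] [/andP [pr0 _] Hr]]]] int _ _]]]] x c.
case: (boolP (fconnect (phi rot) d0 x)) => [d0x|].
  have [y d0y yc] : exists2 y, fconnect (phi rot) d0 y & y.2 = c.
    by case: c; [exact: path_gives_dart pl0 Hl | exact: path_gives_dart pr0 Hr].
  exists y => //; apply: connect_trans d0y.
  by rewrite (fconnect_sym (phi_inj rinj)) in d0x.
move=> /int [s [t [pr' [pl' [[/andP [pr0' _] Hr'] [/andP [pl0' _] Hl'] _ _]]]]].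
by case: c; [exact: path_gives_dart pl0' Hl' | exact: path_gives_dart pr0' Hr'].
Qed.

Definition inner (u : V) : bool := [exists x, tgt x == u] && [exists y, src y == u].

Lemma inner_vertices_card d0 :
  pasting_scheme src tgt rot d0 -> #|V| <= #|[set u | inner u]| + 2.
Proof.
move=> [_ [sG [tG [_ _ Hs Ht]]]].
have outer : ~: [set u | inner u] \subset [set sG; tG].
  apply/subsetP => u; rewrite !inE negb_and => /orP [/existsPn nin|/existsPn nout].
  - by rewrite (proj1 (Hs u) (fun x => nin x)) eqxx.
  - by rewrite (proj1 (Ht u) (fun x => nout x)) eqxx orbT.
rewrite -(cardsC [set u | inner u]) leq_add2l.
by apply: leq_trans (subset_leq_card outer) _; rewrite cards2; case: (sG != tG).
Qed.

Lemma inner_bicolored c u :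
  rotation_system src tgt rot -> inner u -> bicolored rot snd (dvert src tgt) c u.
Proof.
move=> [_ _ rcon _] /andP [/existsP [x /eqP xu] /existsP [y /eqP yu]].
have conn d d' : dvert src tgt d = u -> dvert src tgt d' = u -> fconnect rot d d'.
  by move=> du du'; apply: rcon; rewrite du du'.
by case: c; [exists (y, true), (x, false) | exists (x, false), (y, true)]; split; rewrite ?conn.
Qed.

Lemma cyc_ordered_switches e b a f :
  cyc_ordered rot (e, false) (b, true) (a, false) (f, true) ->
  2 <= #|[set z in switches rot snd false | fconnect rot (e, false) z]|.
Proof.
move=> /and5P [cb ca cf lba laf].
apply: (two_switches (ltnW lba) (ltnW laf) (findex_max cf)); by rewrite ?iter_findex.
Qed.

(* Vertex count: every inner vertex carries a switch of each kind, and the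
   vertex of the cyclic pattern carries a second false-switch. *)
Lemma vertex_changes d0 e b a f :
  pasting_scheme src tgt rot d0 ->
  cyc_ordered rot (e, false) (b, true) (a, false) (f, true) ->
  2 * #|V| <= #|changes rot snd| + 3.
Proof.
move=> ps cyc; have [[rs _ _] _] := ps; have [_ rdv _ _] := rs.
set M := [set u | inner u]; set v := tgt e.
have sw_true : #|M| <= #|switches rot snd true|.
  by apply: (card_bicolored_le_switches rdv) => u; rewrite inE; exact: inner_bicolored.
have sw_false : #|M :\ v| + #|[set z in switches rot snd false | fconnect rot (e, false) z]|
    <= #|switches rot snd false|.
  apply: (card_switches_ge rdv) => [u /setD1P [_] u_inner||z].
  - by rewrite inE in u_inner; exact: inner_bicolored.
  - by apply/subsetP => z; rewrite inE => /andP [].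
  - by rewrite inE => /andP [_ /(cls_connect rdv) ->]; rewrite !inE eqxx.
have two_at_v := cyc_ordered_switches cyc.
have Mv : #|M| <= #|M :\ v| + 1 by rewrite (cardsD1 v M); case: (v \in M); lia.
have := inner_vertices_card ps; rewrite card_changes -/M; lia.
Qed.

(* Face count: every face carries a switch of each kind. *)
Lemma face_changes d0 :
  pasting_scheme src tgt rot d0 -> 2 * fcard (phi rot) predT <= #|changes (phi rot) snd|.
Proof.
move=> ps; have [[[rinj _ _ _] _ _] _] := ps.
have faces c : fcard (phi rot) predT <= #|switches (phi rot) snd c|.
  exact: orbits_le_switches (phi_inj rinj) (faces_bicolored ps).
by rewrite card_changes; have := faces true; have := faces false; lia.
Qed.

End Darts.

Theorem mainTheorem11 (V E : finType) (src tgt : E -> V)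
    (rot : E * bool -> E * bool) (d0 : E * bool) (v : V) :
  pasting_scheme src tgt rot d0 ->
  ~ exists e b a f : E,
      [/\ uniq [:: e; b; a; f],
          [/\ tgt e = v, src b = v, tgt a = v & src f = v]
        & cyc_ordered rot (e, false) (b, true) (a, false) (f, true)].
Proof.
move=> ps [e [b [a [f [_ _ cyc]]]]]; have [[_ _ euler] _] := ps.
have darts := changes_rot_phi rot.
have vertices := vertex_changes ps cyc.
have faces := face_changes ps.
move: euler; rewrite /genus0; lia.
Qed.
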